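(* Let $e_1,\dots,e_k\in\mathbb{C}^{n\times n}$ be an anticommuting family and let $p\le k$. Assume that for every $A\subseteq[k]$ with $|A|\le p$ we have $\prod_{i\in A}e_i^2\neq 0$. Then the matrices $e_A$ with $A\subseteq[k]$, $|A|\le p$ and $|A|$ even are linearly independent; likewise the matrices $e_A$ with $A\subseteq [k]$, $|A|\le p$ and $|A|$ odd are linearly independent.
   Context: A family $e_1,\dots,e_k$ of complex $n\times n$ matrices is called anticommuting if $e_ie_j=-e_je_i$ for all distinct $i,j\in[k]=\{1,\dots,k\}$. For $A=\{i_1,\dots,i_r\}\subseteq[k]$ with $i_1<\dots<i_r$, $e_A:=e_{i_1}e_{i_2}\cdots e_{i_r}$, and $e_\emptyset=I_n$. (The matrices $e_i^2$ commute with each other, so $\prod_{i\in A}e_i^2$ does not depend on the order; the empty product is $I_n$.) *)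

From HB Require Import structures.
From mathcomp Require Import all_boot all_order all_algebra.
Set Implicit Arguments. Unset Strict Implicit. Unset Printing Implicit Defensive.
Import Order.TTheory GRing.Theory Num.Theory.
Local Open Scope ring_scope.

Definition anticommuting (C : numClosedFieldType) (n k : nat)
  (e : 'I_k -> 'M[C]_n) : Prop :=
  forall i j : 'I_k, i != j -> e i *m e j = - (e j *m e i).

(* e_A = e_{i_1} ... e_{i_r} with i_1 < ... < i_r (enum A is increasing);
   e_emptyset = identity. *)
Definition eA (C : numClosedFieldType) (n k : nat)
  (e : 'I_k -> 'M[C]_n) (A : {set 'I_k}) : 'M[C]_n :=
  foldr (fun i M => e i *m M) 1%:M (enum A).

(* prod_{i in A} e_i^2 (the e_i^2 commute, order irrelevant; empty = I). *)
Definition sqprod (C : numClosedFieldType) (n k : nat)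
  (e : 'I_k -> 'M[C]_n) (A : {set 'I_k}) : 'M[C]_n :=
  foldr (fun i M => (e i *m e i) *m M) 1%:M (enum A).

From HB Require Import structures.
From mathcomp Require Import all_boot all_order all_algebra.
From mathcomp Require Import zify.
Import Order.TTheory GRing.Theory Num.Theory.
Set Implicit Arguments. Unset Strict Implicit. Unset Printing Implicit Defensive.
Local Open Scope ring_scope.

(* For B a subset of A, let e_A^B ([mixprod B (enum A)]) be e_A with every
   factor e_i, i in B, replaced by e_i^2, so that e_A^∅ = e_A and
   e_A^A = ∏_{i∈A} e_i^2.  The graded commutator D_i X = e_i X ∓ X e_i
   ([gcomm]) kills e_A^B when i ∉ A, and turns it into ±2 e_A^(B+i) when
   i ∈ A \ B, the sign in D_i being chosen according to the parity of |A \ B|,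
   which within a relation among sets of one parity depends on B only.
   Applying D_i for i ∈ B to a relation ∑ c_A e_A = 0 therefore yields
   ∑_{A ⊇ B} ±2^|B| c_A e_A^B = 0; for B maximal among the sets with c_B ≠ 0
   this reads ±2^|B| c_B ∏_{i∈B} e_i^2 = 0, a contradiction. *)

Lemma free_enum_map (K : fieldType) (V : vectType K) (T : finType)
    (f : T -> V) (Q : {pred T}) :
  (forall c : T -> K, \sum_(x in Q) c x *: f x = 0 -> {in Q, forall x, c x = 0}) ->
  free [seq f x | x <- enum Q].
Proof.
move=> coef0; set s := enum Q; have s_uniq : uniq s := enum_uniq _.
have size_fs : size (map f s) = size s := size_map _ _.
rewrite -[map f s]/(tval (in_tuple (map f s))); apply/freeP => a a_rel i.
have x0 : T by move: i; rewrite size_fs /s; case: (enum Q) => [[]|x _ _].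
pose c x := oapp a 0 (insub (index x s)).
have c_nth (j : 'I_(size (map f s))) : c (nth x0 s j) = a j.
  by rewrite /c index_uniq -?size_fs // valK.
rewrite -c_nth; apply: coef0; last by rewrite -mem_enum mem_nth -?size_fs.
rewrite -big_enum /= (big_nth x0) -size_fs big_mkord -[RHS]a_rel.
by apply: eq_bigr => j _; rewrite c_nth (nth_map x0) -?size_fs.
Qed.

Lemma count_predC_enum (T : finType) (A B : {set T}) :
  count [predC B] (enum A) = #|A :\: B|.
Proof.
rewrite -size_filter -(card_uniqP (filter_uniq _ (enum_uniq (mem A)))).
by apply: eq_card => x; rewrite mem_filter mem_enum !inE.
Qed.

Section AnticommutingFamily.

Variables (R : fieldType) (n k : nat) (e : 'I_k -> 'M[R]_n).
Hypothesis e_anti : forall i j : 'I_k, i != j -> e i *m e j = - (e j *m e i).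
Hypothesis two_neq0 : 2%:R != 0 :> R.
Implicit Types (i : 'I_k) (A B : {set 'I_k}) (l : seq 'I_k).

Definition mixprod (B : {set 'I_k}) (l : seq 'I_k) : 'M[R]_n :=
  foldr (fun j M => (if j \in B then e j *m e j else e j) *m M) 1%:M l.

Definition gcomm (i : 'I_k) (b : bool) (X : 'M[R]_n) : 'M[R]_n :=
  e i *m X - (-1) ^+ b *: (X *m e i).

Lemma mixprod_cat B l1 l2 : mixprod B (l1 ++ l2) = mixprod B l1 *m mixprod B l2.
Proof. by elim: l1 => [|j l IH] /=; rewrite ?mul1mx // IH mulmxA. Qed.

Lemma eq_mixprod B B' l : {in l, B =i B'} -> mixprod B l = mixprod B' l.
Proof.
elim: l => [|j l IH] //= eqBB'; rewrite eqBB' ?mem_head // IH // => x lx.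
by apply: eqBB'; rewrite in_cons lx orbT.
Qed.

Lemma mixprod_set0 l : mixprod set0 l = foldr (fun i M => e i *m M) 1%:M l.
Proof. by elim: l => //= j l ->; rewrite in_set0. Qed.

Lemma mixprod_enum A :
  mixprod A (enum A) = foldr (fun i M => (e i *m e i) *m M) 1%:M (enum A).
Proof.
have : {subset enum A <= A} by move=> j; rewrite mem_enum.
elim: (enum A) => //= j l IH lA; rewrite lA ?mem_head // IH // => x lx.
by apply: lA; rewrite in_cons lx orbT.
Qed.

(* e_i anticommutes with the unsquared factors and commutes with the squares. *)
Lemma mulmx_e_mixprod B l i : i \notin l ->
  e i *m mixprod B l = (-1) ^+ count [predC B] l *: (mixprod B l *m e i).
Proof.
elim: l => [|j l IH] /=; first by rewrite mul1mx mulmx1 scale1r.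
rewrite in_cons negb_or => /andP[ij /IH {}IH]; rewrite mulmxA.
have eij := e_anti ij.
case: ifP => _ /=.
- have -> : e i *m (e j *m e j) = e j *m e j *m e i.
    by rewrite mulmxA eij mulNmx -(mulmxA (e j) (e i)) eij mulmxN opprK mulmxA.
  by rewrite -(mulmxA (e j *m e j)) IH -scalemxAr mulmxA add0n.
- rewrite eij mulNmx -(mulmxA (e j) (e i)) IH -scalemxAr mulmxA.
  by rewrite add1n exprS mulN1r scaleNr.
Qed.

Lemma gcomm0 i b : gcomm i b 0 = 0.
Proof. by rewrite /gcomm mulmx0 mul0mx scaler0 subr0. Qed.

Lemma gcomm_sum i b (I : finType) (P : pred I) (a : I -> R) (X : I -> 'M[R]_n) :
  gcomm i b (\sum_(x | P x) a x *: X x) = \sum_(x | P x) a x *: gcomm i b (X x).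
Proof.
rewrite /gcomm mulmx_sumr mulmx_suml scaler_sumr -sumrB; apply: eq_bigr => x _.
by rewrite scalerBr -scalemxAr -scalemxAl !scalerA mulrC.
Qed.

Lemma gcomm_mixprod_notin B l i : i \notin l ->
  gcomm i (odd (count [predC B] l)) (mixprod B l) = 0.
Proof. by move=> il; rewrite /gcomm mulmx_e_mixprod // signr_odd subrr. Qed.

Lemma gcomm_mixprod_in B l i : uniq l -> i \in l -> i \notin B ->
  gcomm i (odd (count [predC B] l)) (mixprod B l)
  = (2 * (-1) ^+ count [predC B] (take (index i l) l)) *: mixprod (i |: B) l.
Proof.
move=> + il iB; case/splitPr: il => l1 l2.
rewrite cat_uniq /= => /and3P[_ /norP[i_l1 _] /andP[i_l2 _]].
rewrite index_cat (negPf i_l1) /= eqxx addn0 take_size_cat //.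
have mixprodU1 l' : i \notin l' -> mixprod (i |: B) l' = mixprod B l'.
  move=> il'; apply: eq_mixprod => j jl'; rewrite in_setU1.
  by case: eqVneq jl' il' => [-> ->|].
rewrite !mixprod_cat /= setU11 (negPf iB) !mixprodU1 // count_cat /= iB.
set s1 := count _ l1; set s2 := count _ l2.
set G1 := mixprod B l1; set G2 := mixprod B l2.
set M := G1 *m (e i *m e i *m G2).
have left_mul : e i *m (G1 *m (e i *m G2)) = (-1) ^+ s1 *: M.
  by rewrite mulmxA mulmx_e_mixprod // -scalemxAl /M !mulmxA.
have G2_mul : G2 *m e i = (-1) ^+ s2 *: (e i *m G2).
  by rewrite mulmx_e_mixprod // scalerA -expr2 sqrr_sign scale1r.
have right_mul : G1 *m (e i *m G2) *m e i = (-1) ^+ s2 *: M.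
  by rewrite -!mulmxA G2_mul -!scalemxAr /M !mulmxA.
rewrite /gcomm left_mul right_mul scalerA -scalerBl signr_odd !exprD expr1.
rewrite mulN1r mulrN mulNr -mulrA -expr2 sqrr_sign mulr1 opprK.
by rewrite mulr2n mulrDl mul1r.
Qed.

Section Relation.

Variables (Q : pred {set 'I_k}) (pi : bool) (c : {set 'I_k} -> R).
Hypothesis Q_parity : forall A, Q A -> odd #|A| = pi.
Hypothesis c_rel : \sum_(A | Q A) c A *: mixprod set0 (enum A) = 0.

Lemma mixprod_relation B : exists2 w : {set 'I_k} -> R, (forall A, w A != 0) &
  \sum_(A | Q A && (B \subset A)) (c A * w A) *: mixprod B (enum A) = 0.
Proof.
move: {2}#|B| (erefl #|B|) => m; elim: m B => [|m IH] B cardB.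
  exists (fun _ => 1) => [A|]; first exact: oner_neq0.
  rewrite (cards0_eq cardB) -[RHS]c_rel; apply: eq_big => A.
    by rewrite sub0set andbT.
  by rewrite mulr1.
have /card_gt0P[i iB] : (0 < #|B|)%N by rewrite cardB.
set B' := B :\ i; have iB' : i \notin B' by rewrite setD11.
have [|w w_neq0 relB'] := IH B'; first by move: cardB; rewrite (cardsD1 i) iB => -[].
have := congr1 (gcomm i (pi (+) odd #|B'|)) relB'; rewrite gcomm0 gcomm_sum.
pose w' A := w A * (2 * (-1) ^+ count [predC B'] (take (index i (enum A)) (enum A))).
move=> relB; exists w' => [A|].
  by rewrite !mulf_neq0 ?signr_eq0.
rewrite -(setD1K iB) -/B' -[RHS]relB big_mkcond [RHS]big_mkcond.
apply: eq_bigr => A _; rewrite subUset sub1set andbCA.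
case: (boolP (Q A && (B' \subset A))) => [/andP[QA B'A]|_]; last by rewrite andbF.
rewrite andbT.
have -> : pi (+) odd #|B'| = odd (count [predC B'] (enum A)).
  by rewrite count_predC_enum cardsDS // (oddB (subset_leq_card B'A)) (Q_parity QA).
case: ifP => iA; last by rewrite gcomm_mixprod_notin ?mem_enum ?iA // scaler0.
by rewrite gcomm_mixprod_in ?enum_uniq ?mem_enum // scalerA /w' mulrA.
Qed.

Hypothesis sqprod_neq0 : forall A, Q A -> mixprod A (enum A) != 0.

Lemma relation_coef_eq0 A : Q A -> c A = 0.
Proof.
have [m] := ubnP (k - #|A|); elim: m A => // m IH A lt_m QA.
have [w w_neq0] := mixprod_relation A.
rewrite (bigD1 A) ?QA ?subxx //= big1 ?addr0 => [/eqP|A' /andP[/andP[QA' AA'] A'A]].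
  rewrite scaler_eq0 (negPf (sqprod_neq0 QA)) orbF mulf_eq0 (negPf (w_neq0 A)).
  by rewrite orbF => /eqP.
have lt_AA' : (#|A| < #|A'|)%N by rewrite proper_card // properEneq eq_sym A'A.
have le_A'k : (#|A'| <= k)%N by have := max_card A'; rewrite card_ord.
by rewrite IH ?mul0r ?scale0r //; lia.
Qed.

End Relation.

Lemma free_mixprod_parity (Q : pred {set 'I_k}) pi :
    (forall A, Q A -> odd #|A| = pi) -> (forall A, Q A -> mixprod A (enum A) != 0) ->
  free [seq mixprod set0 (enum A) | A <- enum Q].
Proof.
move=> Q_parity sqprod_neq0; apply: free_enum_map => c c_rel A QA.
exact: (relation_coef_eq0 Q_parity c_rel sqprod_neq0 QA).
Qed.

End AnticommutingFamily.

Theorem lemma4p2 (C : numClosedFieldType) (n k p : nat)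
  (e : 'I_k -> 'M[C]_n) :
  anticommuting e ->
  (p <= k)%N ->
  (forall A : {set 'I_k}, (#|A| <= p)%N -> sqprod e A != 0) ->
  free [seq eA e A | A <- enum [pred A : {set 'I_k} | (#|A| <= p)%N && ~~ odd #|A|]]
  /\
  free [seq eA e A | A <- enum [pred A : {set 'I_k} | (#|A| <= p)%N && odd #|A|]].
Proof.
move=> e_anti _ sqprod_neq0.
have two_neq0 : 2%:R != 0 :> C by rewrite pnatr_eq0.
have eA_mixprod A : eA e A = mixprod e set0 (enum A) by rewrite mixprod_set0.
have free_parity pi (P : pred {set 'I_k}) :
    (forall A, P A -> (#|A| <= p)%N /\ odd #|A| = pi) -> free [seq eA e A | A <- enum P].
  move=> P_small; rewrite (eq_map eA_mixprod).
  apply: (free_mixprod_parity e_anti two_neq0 (pi := pi)) => A /P_small[//].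
  by move=> leA _; rewrite mixprod_enum sqprod_neq0.
split; [apply: (free_parity false) | apply: (free_parity true)] => A /andP[leA].
- by move/negbTE.
- by [].
Qed.
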